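(* Let $(R,\mathfrak{m},k)$ be a Noetherian local ring. Suppose that for every finitely generated torsion-less $R$-module $M$, freeness of $M^\ast=\operatorname{Hom}_R(M,R)$ implies freeness of $M$. Then $\operatorname{depth}(R)<2$.
   Context: A module $M$ is torsion-less if the natural map $M\to M^{\ast\ast}$ is injective. *)

From HB Require Import structures.
From mathcomp Require Import all_boot all_order all_algebra.
Set Implicit Arguments. Unset Strict Implicit. Unset Printing Implicit Defensive.
Import GRing.Theory.
Local Open Scope ring_scope.

Definition is_ideal (R : comNzRingType) (I : R -> Prop) : Prop :=
  [/\ I 0, (forall x y, I x -> I y -> I (x + y)) & (forall r x, I x -> I (r * x))].

Definition is_proper_ideal (R : comNzRingType) (I : R -> Prop) : Prop :=
  is_ideal I /\ ~ I 1.

Definition is_maximal_ideal (R : comNzRingType) (I : R -> Prop) : Prop :=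
  is_proper_ideal I /\
  forall J : R -> Prop, is_proper_ideal J -> (forall x, I x -> J x) ->
    forall x, J x -> I x.

Definition is_local_with_max (R : comNzRingType) (m : R -> Prop) : Prop :=
  is_maximal_ideal m /\
  forall n : R -> Prop, is_maximal_ideal n -> forall x, n x <-> m x.

Definition in_ideal_gen (R : comNzRingType) (xs : seq R) (r : R) : Prop :=
  exists c : 'I_(size xs) -> R, r = \sum_(i < size xs) c i * xs`_i.

Definition noetherian (R : comNzRingType) : Prop :=
  forall I : R -> Prop, is_ideal I ->
    exists xs : seq R, forall r, I r <-> in_ideal_gen xs r.

Definition R_regular_seq (R : comNzRingType) (xs : seq R) : Prop :=
  (forall i, (i < size xs)%N -> forall r : R,
      in_ideal_gen (take i xs) (xs`_i * r) -> in_ideal_gen (take i xs) r)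
  /\ ~ in_ideal_gen xs 1.

(* depth R < 2 for the local ring (R, m): every R-regular sequence
   contained in m has length < 2 (depth = sup of such lengths) *)
Definition depth_lt2 (R : comNzRingType) (m : R -> Prop) : Prop :=
  forall xs : seq R, (forall x, x \in xs -> m x) -> R_regular_seq xs ->
    (size xs < 2)%N.

Definition in_span (R : comNzRingType) (M : lmodType R) (s : seq M) (v : M)
  : Prop :=
  exists c : 'I_(size s) -> R, v = \sum_(i < size s) c i *: s`_i.

Definition fin_gen (R : comNzRingType) (M : lmodType R) : Prop :=
  exists s : seq M, forall v : M, in_span s v.

Definition lin_indep (R : comNzRingType) (M : lmodType R) (s : seq M) : Prop :=
  forall c : 'I_(size s) -> R, \sum_(i < size s) c i *: s`_i = 0 ->
    forall i, c i = 0.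

(* free (with a finite basis; all modules considered here are f.g.) *)
Definition free_mod (R : comNzRingType) (M : lmodType R) : Prop :=
  exists s : seq M, (forall v : M, in_span s v) /\ lin_indep s.

Definition is_linfun (R : comNzRingType) (M : lmodType R) (f : M -> R) : Prop :=
  forall (a : R) (u v : M), f (a *: u + v) = a * f u + f v.

Definition dual_free (R : comNzRingType) (M : lmodType R) : Prop :=
  exists fs : seq (M -> R),
    (forall i : 'I_(size fs), is_linfun (nth (fun _ => 0) fs i)) /\
    (forall g : M -> R, is_linfun g ->
       exists c : 'I_(size fs) -> R,
         forall v, g v = \sum_(i < size fs) c i * nth (fun _ => 0) fs i v) /\
    (forall c : 'I_(size fs) -> R,
       (forall v, \sum_(i < size fs) c i * nth (fun _ => 0) fs i v = 0) ->
       forall i, c i = 0).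

(* torsion-less: the natural map M -> M^** , v |-> (f |-> f v), is injective *)
Definition torsionless (R : comNzRingType) (M : lmodType R) : Prop :=
  forall u v : M, (forall f : M -> R, is_linfun f -> f u = f v) -> u = v.

(* If x, y is a regular sequence, the ideal I = (x, y) is a finitely generated
   torsion-less module (it sits inside R) whose dual is free of rank one: since
   y is regular modulo x, every functional on I is multiplication by an element
   of R.  But I is not free: two elements a, b of an ideal always satisfy
   b a - a b = 0, and a single generator of I would have to be a unit, whereas
   I <> R. *)
From HB Require Import structures.
From mathcomp Require Import all_boot all_order all_algebra.
From mathcomp Require Import boolp ring.
Set Implicit Arguments. Unset Strict Implicit. Unset Printing Implicit Defensive.
Import GRing.Theory.
Local Open Scope ring_scope.

Section LinearFunctionals.
Variables (R : comNzRingType) (M : lmodType R) (g : M -> R).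
Hypothesis g_lin : is_linfun g.

Lemma is_linfun0 : g 0 = 0.
Proof.
have := g_lin 1 0 0; rewrite scaler0 addr0 mul1r -{1}[g 0]addr0.
by move=> /addrI/esym.
Qed.

Lemma is_linfunD u v : g (u + v) = g u + g v.
Proof. by rewrite -{1}[u]scale1r g_lin mul1r. Qed.

Lemma is_linfunZ a u : g (a *: u) = a * g u.
Proof. by rewrite -[a *: u]addr0 g_lin is_linfun0 addr0. Qed.

End LinearFunctionals.

Section TwoTermCombinations.
Variable R : comNzRingType.

Definition coef2 (p q : R) {n} (i : 'I_n) : R :=
  if val i == 0%N then p else if val i == 1%N then q else 0.

Lemma sum_coef2 (V : lmodType R) (p q : R) (a b : V) s :
  \sum_(i < size [:: a, b & s]) coef2 p q i *: [:: a, b & s]`_i = p *: a + q *: b.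
Proof. by rewrite 2!big_ord_recl big1 ?addr0 // => i _; rewrite scale0r. Qed.

End TwoTermCombinations.

Section RegularPair.
Variable R : comNzRingType.

Record regular_pair (x y : R) : Prop := RegularPair {
  regular_pair_lreg : GRing.lreg x;
  (* y is a nonzerodivisor on R / xR *)
  regular_pair_mod : forall r e, y * r = e * x -> exists f, r = f * x;
  regular_pair_proper : forall p q, p * x + q * y != 1 }.

Lemma in_ideal_gen_nil (r : R) : in_ideal_gen [::] r -> r = 0.
Proof. by case=> c ->; rewrite big_ord0. Qed.

Lemma in_ideal_gen1 (x r : R) : in_ideal_gen [:: x] r <-> exists c, r = c * x.
Proof.
split=> [[c ->]|[c ->]]; first by exists (c ord0); rewrite big_ord1.
by exists (fun=> c); rewrite big_ord1.
Qed.

Lemma in_ideal_gen_cons2 (x y p q : R) rest :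
  in_ideal_gen [:: x, y & rest] (p * x + q * y).
Proof. by exists (coef2 p q); rewrite (sum_coef2 (V := R^o)). Qed.

Lemma R_regular_seq_pair (x y : R) rest :
  R_regular_seq [:: x, y & rest] -> regular_pair x y.
Proof.
case=> reg proper; split.
- apply: mulrI0_lreg => r xr0; apply: in_ideal_gen_nil (reg 0%N isT r _).
  by exists (fun=> 0); rewrite big_ord0 /= xr0.
- move=> r e yr; apply/in_ideal_gen1/(reg 1%N isT r).
  by apply/in_ideal_gen1; exists e.
- move=> p q; apply/eqP=> pq1; apply: proper.
  by rewrite -pq1; apply: in_ideal_gen_cons2.
Qed.

End RegularPair.

Section PairIdeal.
Variables (R : comNzRingType) (x y : R).

Definition ideal2 : {pred R^o} := fun r => `[< exists p q, r = p * x + q * y >].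

Lemma ideal2P r : reflect (exists p q, r = p * x + q * y) (r \in ideal2).
Proof. exact: asboolP. Qed.

Lemma ideal2_closed : subsemimod_closed ideal2.
Proof.
split; [split|].
- by apply/ideal2P; exists 0, 0; rewrite !mul0r addr0.
- move=> _ _ /ideal2P[p [q ->]] /ideal2P[p' [q' ->]]; apply/ideal2P.
  by exists (p + p'), (q + q'); rewrite !mulrDl addrACA.
- move=> c _ /ideal2P[p [q ->]]; apply/ideal2P.
  by exists (c * p), (c * q); rewrite [c *: _]mulrDr !mulrA.
Qed.

HB.instance Definition _ :=
  GRing.isSubmodClosed.Build R R^o ideal2 ideal2_closed.

Record ideal2_mod := Ideal2 { ideal2_val : R^o; _ : ideal2_val \in ideal2 }.
HB.instance Definition _ := [isSub for ideal2_val].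
HB.instance Definition _ := [Choice of ideal2_mod by <:].
HB.instance Definition _ := [SubChoice_isSubLmodule of ideal2_mod by <:].

Lemma ideal2_x_subproof : x \in ideal2.
Proof. by apply/ideal2P; exists 1, 0; rewrite mul1r mul0r addr0. Qed.

Lemma ideal2_y_subproof : y \in ideal2.
Proof. by apply/ideal2P; exists 0, 1; rewrite mul1r mul0r add0r. Qed.

Definition ideal2_x : ideal2_mod := Ideal2 ideal2_x_subproof.
Definition ideal2_y : ideal2_mod := Ideal2 ideal2_y_subproof.

Lemma ideal2_val_comb p q :
  ideal2_val (p *: ideal2_x + q *: ideal2_y) = p * x + q * y.
Proof. by []. Qed.

Lemma ideal2_decomp (v : ideal2_mod) :
  exists p q, v = p *: ideal2_x + q *: ideal2_y.
Proof.
case: v => r r_in; have /ideal2P[p [q r_eq]] := r_in.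
by exists p, q; apply: val_inj; exact: r_eq.
Qed.

Lemma is_linfun_ideal2_val : is_linfun (@ideal2_val : ideal2_mod -> R).
Proof. by []. Qed.

Lemma ideal2_fin_gen : fin_gen ideal2_mod.
Proof.
exists [:: ideal2_x; ideal2_y] => v; have [p [q ->]] := ideal2_decomp v.
by exists (coef2 p q); rewrite sum_coef2.
Qed.

Lemma ideal2_torsionless : torsionless ideal2_mod.
Proof. by move=> u v /(_ _ is_linfun_ideal2_val); apply: val_inj. Qed.

Lemma lin_indep_ideal2_size (s : seq ideal2_mod) : lin_indep s -> (size s <= 1)%N.
Proof.
case: s => [|a [|b s]] // indep.
have b0 : b = 0.
  apply: val_inj; apply: (indep (coef2 (ideal2_val b) (- ideal2_val a)) _ ord0).
  by rewrite sum_coef2; apply: val_inj; rewrite /= scaleNr [_ *: _]mulrC subrr.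
have := indep (coef2 0 1) _ (lift ord0 ord0); rewrite sum_coef2 b0 scaler0 addr0.
by rewrite scale0r => /(_ erefl) /eqP; rewrite oner_eq0.
Qed.

Hypothesis xy_reg : regular_pair x y.

Lemma ideal2_functional_mul (g : ideal2_mod -> R) :
  is_linfun g -> exists e, forall v, g v = e * ideal2_val v.
Proof.
move=> g_lin.
have comm : x * g ideal2_y = y * g ideal2_x.
  have xY_yX : x *: ideal2_y = y *: ideal2_x.
    by apply: val_inj; rewrite /= [_ *: _]mulrC.
  by rewrite -!is_linfunZ // xY_yX.
have [e gX] : exists e, g ideal2_x = e * x.
  by apply: (regular_pair_mod xy_reg (e := g ideal2_y)); rewrite -comm mulrC.
have gY : g ideal2_y = e * y.
  by apply: (regular_pair_lreg xy_reg); rewrite comm gX; ring.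
exists e => v; have [p [q ->]] := ideal2_decomp v.
by rewrite is_linfunD // !is_linfunZ // gX gY ideal2_val_comb; ring.
Qed.

Lemma ideal2_dual_free : dual_free ideal2_mod.
Proof.
exists [:: @ideal2_val]; split; [|split].
- by move=> i; rewrite ord1; apply: is_linfun_ideal2_val.
- move=> g /ideal2_functional_mul[e ge]; exists (fun=> e) => v.
  by rewrite big_ord1 ge.
- move=> c c0 i; rewrite ord1; apply/eqP.
  rewrite -(mulrI_eq0 _ (regular_pair_lreg xy_reg)).
  by have := c0 ideal2_x; rewrite big_ord1 /= mulrC => ->.
Qed.

Lemma ideal2_not_cyclic (g : ideal2_mod) : ~ (forall v, in_span [:: g] v).
Proof.
move=> span; set r := ideal2_val g.
have multiple v : exists a, ideal2_val v = a * r.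
  by have [c ->] := span v; rewrite big_ord1; exists (c ord0).
have [[a xa] [b yb]] := (multiple ideal2_x, multiple ideal2_y); rewrite /= in xa yb.
have r_reg : GRing.lreg r.
  apply: mulrI0_lreg => t rt0; apply: (regular_pair_lreg xy_reg).
  by rewrite xa mulr0 -mulrA rt0 mulr0.
have [f af] : exists f, a = f * x.
  apply: (regular_pair_mod xy_reg (e := b)); apply: r_reg.
  by rewrite {1}xa yb; ring.
have fr1 : f * r = 1.
  by apply: (regular_pair_lreg xy_reg); rewrite mulr1 [RHS]xa af; ring.
have /ideal2P[p [q rpq]] := valP g.
have /eqP[] := regular_pair_proper xy_reg (f * p) (f * q).
by rewrite -fr1 /r rpq; ring.
Qed.

Lemma ideal2_not_free : ~ free_mod ideal2_mod.
Proof.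
case=> -[|g [|b s]] [span indep].
- have [c /(congr1 val)] := span ideal2_x; rewrite big_ord0 /= => x0.
  by have := lreg_neq0 (regular_pair_lreg xy_reg); rewrite x0 eqxx.
- exact: ideal2_not_cyclic span.
- by have := lin_indep_ideal2_size indep.
Qed.

End PairIdeal.

Theorem proposition4p20 (R : comNzRingType) (m : R -> Prop) :
  noetherian R -> is_local_with_max m ->
  (forall M : lmodType R, fin_gen M -> torsionless M -> dual_free M -> free_mod M) ->
  depth_lt2 m.
Proof.
move=> _ _ dual_free_free xs _ xs_reg; rewrite ltnNge; apply/negP.
case: xs xs_reg => [|x [|y rest]] // /R_regular_seq_pair xy_reg _.
apply: (ideal2_not_free xy_reg); apply: dual_free_free.
- exact: ideal2_fin_gen.
- exact: ideal2_torsionless.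
- exact: ideal2_dual_free.
Qed.
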